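(* $\mathcal{L}_{\mathsf{SAFA}}$ and $\mathcal{L}_{\mathsf{KRFA}}$ are incomparable: there is a data language accepted by some SAFA but by no $k$-register automaton (for any $k$), and there is a data language accepted by some $k$-register automaton but by no SAFA.
   Context: $D$ is a fixed countably infinite set of data values; for a finite alphabet $\Sigma$, data languages are subsets of $(\Sigma\times D)^*$. A set augmented finite automaton (SAFA) is a tuple $M=(Q,\Sigma\times D,q_0,F,H,\delta)$: $Q$ finite set of states, $q_0\in Q$ initial, $F\subseteq Q$ final, $H=\{h_1,\dots,h_m\}$ a finite collection of (names of) sets of data values, $\delta\subseteq Q\times\Sigma\times C\times OP\times Q$ with $C=\{p(h_i),\,!p(h_i)\}$, $OP=\{-\}\cup\{\mathsf{ins}(h_i)\}$. Configurations are $(q,\langle S_1,\dots,S_m\rangle)$, $S_i\subseteq D$ finite; initially state $q_0$ and all sets empty. On reading $(a,d)$, a transition $(q,a,\alpha,op,q')$ from the current state may be taken if $\alpha=p(h_i)$ and $d\in S_i$, or $\alpha=\,!p(h_i)$ and $d\notin S_i$; then the state becomes $q'$ and if $op=\mathsf{ins}(h_j)$, $d$ is added to $S_j$. A word is accepted if some run reads it entirely and ends in $F$. $\mathcal{L}_{\mathsf{SAFA}}$ is the class of data languages accepted by SAFA. A $k$-register automaton is a tuple $(Q,\Sigma,\delta,\tau_0,U,q_0,F)$ with finite state set $Q$, initial state $q_0$, final states $F\subseteq Q$, initial register assignment $\tau_0:\{1,\dots,k\}\to D\cup\{\bot\}$ (the non-$\bot$ values being pairwise distinct; $\bot$ means empty),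 a partial update function $U:Q\times\Sigma\to\{1,\dots,k\}$ and transition relation $\delta\subseteq Q\times\Sigma\times\{1,\dots,k\}\times Q$. Reading $(a,d)$ in state $q$: if $d$ equals the content of some register $i$, the automaton takes a transition $(q,a,i,q')\in\delta$ (halting without consuming if none exists); if $d$ is in no register, then if $U(q,a)$ is undefined it halts, otherwise $d$ is written into register $U(q,a)$ and a transition $(q,a,U(q,a),q')\in\delta$ is taken (halting if none). A word is accepted if it is entirely consumed and the automaton ends in $F$. $\mathcal{L}_{\mathsf{KRFA}}$ is the class of data languages accepted by $k$-register automata for some $k\geq 1$. *)

From mathcomp Require Import all_boot.
Set Implicit Arguments. Unset Strict Implicit. Unset Printing Implicit Defensive.

Definition D := nat.

(* conditions p(h_i) / !p(h_i), over the set names H = 'I_m *)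
Inductive safa_cond (m : nat) := Pin of 'I_m | NPin of 'I_m.

Record SAFA (Sigma : finType) := {
  safa_Q : finType;
  safa_m : nat;
  safa_q0 : safa_Q;
  safa_F : {set safa_Q};
  (* transition relation  delta ⊆ Q × Σ × C × OP × Q;
     the operation is  None = "-",  Some j = ins(h_j) *)
  safa_delta : safa_Q -> Sigma -> safa_cond safa_m -> option 'I_safa_m -> safa_Q -> Prop
}.

Definition safa_sat m (c : safa_cond m) (S : 'I_m -> seq D) (d : D) : Prop :=
  match c with
  | Pin i => d \in S i
  | NPin i => d \notin S i
  end.

Definition safa_upd m (op : option 'I_m) (S : 'I_m -> seq D) (d : D) : 'I_m -> seq D :=
  match op with
  | None => S
  | Some j => fun i => if i == j then d :: S i else S i
  end.

Fixpoint safa_acc Sigma (M : SAFA Sigma) (q : safa_Q M) (S : 'I_(safa_m M) -> seq D)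
    (w : seq (Sigma * D)) : Prop :=
  match w with
  | [::] => q \in @safa_F _ M
  | (a, d) :: w' =>
      exists (c : safa_cond (safa_m M)) (op : option 'I_(safa_m M)) (q' : safa_Q M),
        [/\ @safa_delta _ M q a c op q', safa_sat c S d & safa_acc q' (safa_upd op S d) w']
  end.

Definition safa_accepts Sigma (M : SAFA Sigma) (w : seq (Sigma * D)) : Prop :=
  @safa_acc _ M (safa_q0 M) (fun _ => [::]) w.

Definition in_L_SAFA (Sigma : finType) (L : seq (Sigma * D) -> Prop) : Prop :=
  exists M : SAFA Sigma, forall w, L w <-> safa_accepts M w.

Record KRA (Sigma : finType) (k : nat) := {
  kra_Q : finType;
  kra_delta : kra_Q -> Sigma -> 'I_k -> kra_Q -> Prop;
  kra_tau0 : 'I_k -> option D;            (* None = ⊥ *)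
  kra_tau0_inj : forall i j d, kra_tau0 i = Some d -> kra_tau0 j = Some d -> i = j;
  kra_U : kra_Q -> Sigma -> option 'I_k;
  kra_q0 : kra_Q;
  kra_F : {set kra_Q}
}.

Definition kra_write k (tau : 'I_k -> option D) (j : 'I_k) (d : D) : 'I_k -> option D :=
  fun i => if i == j then Some d else tau i.

Fixpoint kra_acc Sigma k (A : KRA Sigma k) (q : kra_Q A) (tau : 'I_k -> option D)
    (w : seq (Sigma * D)) : Prop :=
  match w with
  | [::] => q \in @kra_F _ _ A
  | (a, d) :: w' =>
      (exists i, tau i = Some d /\
         exists q', @kra_delta _ _ A q a i q' /\ kra_acc q' tau w')
      \/
      ((forall i, tau i <> Some d) /\
         exists j, @kra_U _ _ A q a = Some j /\
           exists q', @kra_delta _ _ A q a j q' /\ kra_acc q' (kra_write tau j d) w')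
  end.

Definition kra_accepts Sigma k (A : KRA Sigma k) (w : seq (Sigma * D)) : Prop :=
  @kra_acc _ _ A (kra_q0 A) (kra_tau0 A) w.

Definition in_L_KRFA (Sigma : finType) (L : seq (Sigma * D) -> Prop) : Prop :=
  exists k, 0 < k /\ exists A : KRA Sigma k, forall w, L w <-> kra_accepts A w.

From mathcomp Require Import all_boot.
Set Implicit Arguments. Unset Strict Implicit. Unset Printing Implicit Defensive.

(* Words whose data values are pairwise distinct are recognised by a SAFA with
   one set storing every value read, but not by a k-register automaton: after
   k + 1 distinct values some value x of the prefix is missing from the
   registers, and since an unregistered value is processed exactly like a fresh
   one, accepting a fresh last value forces accepting x as well.
   Conversely, words d1 d1 d2 d2 ... dn dn are recognised with one register,
   but not by a SAFA with m sets.  In an accepting run on 0 0 1 1 ... m m, the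
   second letter of each pair passes a test that another value passes as well:
   a test !p(h) is passed by a fresh value, and a test p(h) by any older member
   of h, unless h was empty before the pair.  As sets only grow, the last case
   happens for at most m pairs, and replacing the letter elsewhere yields an
   accepted word that is not of this form. *)

Lemma safa_upd_neq m (op : option 'I_m) S d v i :
  v != d -> (v \in safa_upd op S d i) = (v \in S i).
Proof.
by move=> vd; case: op => [j|] //=; case: (i == j); rewrite ?in_cons ?(negbTE vd).
Qed.

Lemma safa_upd_mono m (op : option 'I_m) S d v i :
  v \in S i -> v \in safa_upd op S d i.
Proof. by case: op => [j|] //=; case: (i == j) => // vS; rewrite in_cons vS orbT. Qed.

Lemma mem_safa_upd m (op : option 'I_m) S d v i :
  v \in safa_upd op S d i -> (v == d) || (v \in S i).
Proof.
by case: op => [j|] /=; [case: (i == j); rewrite ?in_cons // => -> | move=> ->];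
  rewrite ?orbT.
Qed.

Lemma card_nil_lt (I : finType) (T : eqType) (S S' : I -> seq T) i v :
  (forall j, {subset S j <= S' j}) -> S i = [::] -> v \in S' i ->
  #|[set j | S' j == [::]]| < #|[set j | S j == [::]]|.
Proof.
move=> subS Si vS'i; apply/proper_card/properP; split.
  apply/subsetP => j; rewrite !inE => /eqP S'j.
  by case: (S j) (subS j) => // x s /(_ x (mem_head x s)); rewrite S'j.
by exists i; rewrite inE ?Si //; apply: contraTN vS'i => /eqP->.
Qed.

Section SAFARuns.

Variables (Sigma : finType) (M : SAFA Sigma).

Lemma eq_safa_acc w q S S' :
  (forall i, {in map snd w, forall v, (v \in S i) = (v \in S' i)}) ->
  safa_acc q S w -> @safa_acc _ M q S' w.
Proof.
elim: w q S S' => [//|[a d] w IH] q S S' eqS /= [c [op [q' [tr sat acc]]]].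
exists c, op, q'; split => //.
  by case: c {tr} sat => i /=; rewrite (eqS i) ?mem_head.
apply: IH acc => i v vw; case: op {tr} => [j|] /=; last by rewrite eqS // in_cons vw orbT.
by case: (i == j); rewrite ?in_cons eqS // in_cons vw orbT.
Qed.

Lemma safa_acc_swap q q' a c op S d e w :
  safa_delta q a c op q' -> safa_sat c S e -> safa_acc q' (safa_upd op S d) w ->
  d \notin map snd w -> e \notin map snd w -> @safa_acc _ M q S ((a, e) :: w).
Proof.
move=> tr sat acc dw ew; exists c, op, q'; split => //.
apply: eq_safa_acc acc => i v vw.
by rewrite !safa_upd_neq ?(memPn dw) ?(memPn ew).
Qed.

End SAFARuns.

(* [tau'] is the register assignment reached before the last letter. *)
Lemma kra_acc_rcons_fresh Sigma k (A : KRA Sigma k) w a d q tau :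
  (forall i, tau i <> Some d) -> d \notin map snd w ->
  kra_acc q tau (rcons w (a, d)) ->
  exists tau' : 'I_k -> option D, forall x,
    (forall i, tau' i <> Some x) -> @kra_acc _ _ A q tau (rcons w (a, x)).
Proof.
elim: w q tau => [|[a0 d0] w IH] q tau d_tau /=.
  move=> _ [[i [/d_tau //]]|[_ step]].
  by exists tau => x x_tau; right; split.
rewrite in_cons negb_or => /andP[dd0 dw].
case=> [[i [tau_i [q1 [tr acc]]]]|[d0_tau [j [Uj [q1 [tr acc]]]]]].
  have [tau' Htau'] := IH q1 tau d_tau dw acc.
  by exists tau' => x /Htau' accx; left; exists i; split => //; exists q1.
have d_tau1 : forall i, kra_write tau j d0 i <> Some d.
  by move=> i; rewrite /kra_write; case: (i == j) => // -[d0d]; rewrite d0d eqxx in dd0.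
have [tau' Htau'] := IH q1 _ d_tau1 dw acc.
by exists tau' => x /Htau' accx; right; split => //; exists j; split => //; exists q1.
Qed.

Lemma exists_unregistered k (tau : 'I_k -> option D) (s : seq D) :
  uniq s -> k < size s -> exists2 x, x \in s & forall i, tau i <> Some x.
Proof.
move=> s_uniq s_big; pose regs := pmap tau (enum 'I_k).
have /allPn[x xs x_regs] : ~~ all (mem regs) s.
  apply: contraTN s_big => /allP s_regs; rewrite -leqNgt.
  apply: leq_trans (uniq_leq_size s_uniq s_regs) _.
  by rewrite size_pmap (leq_trans (count_size _ _)) ?size_enum_ord.
exists x => // i tau_i; apply/negP: x_regs.
by rewrite /= mem_pmap -tau_i map_f ?mem_enum.
Qed.

Definition distinct_data (w : seq (unit * D)) : Prop := uniq (map snd w).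

Definition distinct_checker : SAFA unit := {|
  safa_Q := unit; safa_m := 1; safa_q0 := tt; safa_F := setT;
  safa_delta := fun _ _ c op _ => c = NPin ord0 /\ op = Some ord0 |}.

Lemma distinct_checker_acc w (S : 'I_1 -> seq D) :
  @safa_acc _ distinct_checker tt S w <->
  uniq (map snd w) && ~~ has (mem (S ord0)) (map snd w).
Proof.
elim: w S => [|[a d] w IH] S /=; first by rewrite in_setT.
have has_mem_cons : has (mem (d :: S ord0)) (map snd w) =
               (d \in map snd w) || has (mem (S ord0)) (map snd w).
  by rewrite -has_pred1 -has_predU; apply: eq_has => x; rewrite /= in_cons eq_sym.
split.
  case=> c [op [[] [[-> ->] /= dS /IH]]].
  by rewrite eqxx has_mem_cons !negb_or (negbTE dS) => /and3P[-> -> ->].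
rewrite negb_or => /and3P[/andP[dw uw] dS hw].
exists (NPin ord0), (Some ord0), tt; split => //.
by apply/IH; rewrite /= has_mem_cons negb_or dw uw hw.
Qed.

Lemma distinct_data_SAFA : in_L_SAFA distinct_data.
Proof.
exists distinct_checker => w; apply: iff_sym.
apply: iff_trans (distinct_checker_acc _ _) _.
by rewrite (@eq_has _ _ pred0) ?has_pred0 ?andbT.
Qed.

Lemma distinct_data_not_KRFA : ~ in_L_KRFA distinct_data.
Proof.
case=> k [_ [A acc_iff]].
have [d d_new d_tau0] :
    exists2 d, d \in iota k.+1 k.+1 & forall i, kra_tau0 A i <> Some d.
  by apply: exists_unregistered; rewrite ?iota_uniq ?size_iota.
set w := [seq (tt, v) | v <- iota 0 k.+1].
have data_w : map snd w = iota 0 k.+1 by rewrite -map_comp map_id.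
have d_w : d \notin map snd w.
  by move: d_new; rewrite data_w !mem_iota add0n -leqNgt => /andP[].
have : kra_accepts A (rcons w (tt, d)).
  by apply/acc_iff; rewrite /distinct_data map_rcons rcons_uniq d_w data_w iota_uniq.
case/(kra_acc_rcons_fresh d_tau0 d_w) => tau' Htau'.
have [x x_w x_tau'] : exists2 x, x \in iota 0 k.+1 & forall i, tau' i <> Some x.
  by apply: exists_unregistered; rewrite ?iota_uniq ?size_iota.
have /acc_iff := Htau' x x_tau'.
by rewrite /distinct_data map_rcons rcons_uniq data_w x_w.
Qed.

Fixpoint paired (s : seq D) : bool :=
  if s is x :: y :: s' then (x == y) && paired s' else s == [::].

Definition paired_data (w : seq (unit * D)) : Prop := paired (map snd w).

Definition pair_checker : KRA unit 1 := {|
  kra_Q := bool;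
  kra_delta := fun q _ _ q' => q' = ~~ q;
  kra_tau0 := fun _ => None;
  kra_tau0_inj := ltac:(by []);
  kra_U := fun q _ => if q then Some ord0 else None;
  kra_q0 := true;
  kra_F := [set true] |}.

(* State [true] awaits the first letter of a pair, state [false] the second,
   which must be the value just stored in the register. *)
Lemma pair_checker_acc w :
  (forall tau, @kra_acc _ _ pair_checker true tau w <-> paired (map snd w)) /\
  (forall tau x, tau ord0 = Some x ->
     @kra_acc _ _ pair_checker false tau w <-> paired (x :: map snd w)).
Proof.
elim: w => [|[a d] w [IHtrue IHfalse]] /=; first by split => [tau|tau x _]; rewrite inE.
split => [tau|tau x tau_x].
  set tau1 := if tau ord0 == Some d then tau else kra_write tau ord0 d.
  have tau1_d : tau1 ord0 = Some d.
    by rewrite /tau1; case: eqP => // _; rewrite /kra_write eqxx.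
  apply: iff_trans (IHfalse _ _ tau1_d); rewrite /tau1; split.
    case=> [[i [tau_i [_ [-> acc]]]]|[d_tau [_ [[<-] [_ [-> acc]]]]]].
      by rewrite (ord1 i) in tau_i; rewrite tau_i eqxx.
    by case: eqP => // /d_tau.
  case: eqP => [tau_d acc|tau_d acc].
    by left; exists ord0; split => //; exists false.
  right; split; first by move=> i; rewrite (ord1 i).
  by exists ord0; split => //; exists false.
split.
  case=> [[i [tau_i [_ [-> /IHtrue acc]]]]|[_ [_ []]]] //.
  by rewrite (ord1 i) tau_x in tau_i; case: tau_i => ->; rewrite eqxx.
by case/andP=> /eqP <- /IHtrue acc; left; exists ord0; split => //; exists true.
Qed.

Lemma paired_data_KRFA : in_L_KRFA paired_data.
Proof.
exists 1; split => //; exists pair_checker => w.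
exact: iff_sym (proj1 (pair_checker_acc w) _).
Qed.

Fixpoint paired_word (b n : nat) : seq (unit * D) :=
  if n is n'.+1 then (tt, b) :: (tt, b) :: paired_word b.+1 n' else [::].

Lemma paired_word_paired b n : paired (map snd (paired_word b n)).
Proof. by elim: n b => //= n IH b; rewrite eqxx IH. Qed.

Lemma mem_paired_word b n v :
  v \in map snd (paired_word b n) -> b <= v < b + n.
Proof.
elim: n b => //= n IH b; rewrite addnS -addSn !in_cons.
by case/or3P => [/eqP->|/eqP->|/IH /andP[/ltnW -> ->]] //; rewrite leqnn ltn_addr.
Qed.

Lemma safa_acc_paired_word (M : SAFA unit) n b q S :
  safa_acc q S (paired_word b n) -> (forall i, {in S i, forall v, v < b}) ->
  #|[set i | S i == [::]]| < n ->
  exists2 u, ~~ paired (map snd u) & @safa_acc _ M q S u.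
Proof.
elim: n b q S => [//|n IH] b q S /=.
case=> c1 [op1 [q1 [tr1 sat1 [c2 [op2 [q2 [tr2 sat2 acc]]]]]]] S_lt_b empties_n.
set S1 := safa_upd op1 S b in sat2 acc *.
have S1_le_b i v : v \in S1 i -> v <= b.
  by case/mem_safa_upd/orP => [/eqP->|/S_lt_b/ltnW].
have rest_gt_b v : v \in map snd (paired_word b.+1 n) -> b < v < b.+1 + n.
  exact: mem_paired_word.
have b_rest : b \notin map snd (paired_word b.+1 n).
  by apply/negP => /rest_gt_b; rewrite ltnn.
have accS e : safa_sat c2 S1 e -> e \notin map snd (paired_word b.+1 n) ->
    @safa_acc _ M q S [:: (tt, b), (tt, e) & paired_word b.+1 n].
  move=> sat_e e_rest; exists c1, op1, q1; split => //.
  exact: safa_acc_swap tr2 sat_e acc b_rest e_rest.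
case: c2 tr2 sat2 accS => i tr2 sat2 accS.
- case Si: (S i) => [|y s].
    set S2 := safa_upd op2 S1 b in acc.
    have S2_le_b i' v : v \in S2 i' -> v < b.+1.
      by case/mem_safa_upd/orP => [/eqP->|/S1_le_b].
    have [u not_paired acc_u] : exists2 u, ~~ paired (map snd u) & @safa_acc _ M q2 S2 u.
      apply: IH acc _ _ => [i' v /S2_le_b //|].
      rewrite ltnS in empties_n; apply: leq_trans _ empties_n.
      apply: (card_nil_lt _ Si (safa_upd_mono op2 b sat2)).
      by move=> j v /(safa_upd_mono op1 b) /(safa_upd_mono op2 b).
    exists [:: (tt, b), (tt, b) & u]; first by rewrite /= eqxx.
    by exists c1, op1, q1; split => //; exists (Pin i), op2, q2.
  have y_lt_b : y < b by apply: (S_lt_b i); rewrite Si mem_head.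
  exists [:: (tt, b), (tt, y) & paired_word b.+1 n].
    by rewrite /= (gtn_eqF y_lt_b).
  apply: accS; first by apply: safa_upd_mono; rewrite Si mem_head.
  by apply/negP => /rest_gt_b /andP[/(ltn_trans y_lt_b)]; rewrite ltnn.
- exists [:: (tt, b), (tt, b.+1 + n) & paired_word b.+1 n].
    by rewrite /= eqn_leq (leqNgt _ b) ltnS leq_addr andbF.
  apply: accS; first by apply/negP => /S1_le_b; rewrite leqNgt ltnS leq_addr.
  by apply/negP => /rest_gt_b; rewrite ltnn andbF.
Qed.

Lemma paired_data_not_SAFA : ~ in_L_SAFA paired_data.
Proof.
case=> M acc_iff.
have /safa_acc_paired_word : safa_accepts M (paired_word 0 (safa_m M).+1).
  by apply/acc_iff; apply: paired_word_paired.
case=> // [|u not_paired /acc_iff]; last by rewrite /paired_data (negbTE not_paired).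
by rewrite ltnS (leq_trans (max_card _)) // card_ord.
Qed.

Theorem theorem15 :
  (exists (Sigma : finType) (L : seq (Sigma * D) -> Prop),
      in_L_SAFA L /\ ~ in_L_KRFA L) /\
  (exists (Sigma : finType) (L : seq (Sigma * D) -> Prop),
      in_L_KRFA L /\ ~ in_L_SAFA L).
Proof.
split; [exists unit, distinct_data | exists unit, paired_data]; split.
- exact: distinct_data_SAFA.
- exact: distinct_data_not_KRFA.
- exact: paired_data_KRFA.
- exact: paired_data_not_SAFA.
Qed.
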